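(* Let $N=d\ge2$, $w>1$, let $\mathcal{G}$ be the causal graph on $[N]$, $W_Q=W_K=0$ (so $A_{ij}=1/i$ for $j\le i$ and $0$ otherwise), and let $W_V\in\mathbb{R}^{N\times N}$ have $1$ on the diagonal, $w$ on the superdiagonal and $0$ elsewhere. For signs $s_1,\dots,s_N\in\{\pm1\}$ define $X\in\mathbb{R}^{N\times N}$ row by row: $X_{1,:}=s_1e_N$, and for $k\ge2$, $X_{k,j}=-X_{k-1,j+1}/w$ for $1\le j\le N-1$ and $X_{k,N}=s_k\sqrt{1-1/w^2}$. Then each of these $2^N$ matrices is an equilibrium of the LayerNorm dynamics $X\mapsto DAXW_V$ (with $D=\mathrm{diag}(1/\|(AXW_V)_{i,:}\|_2)$), has unit-norm rows and rank $N$, and its stable rank satisfies $$1\le \mathrm{SRank}(X)=\frac{\|X\|_F^2}{\|X\|_2^2}\le\frac{N}{N-(N-1)/w^2}.$$ Consequently, for any $\delta>0$, choosing $w\ge\sqrt{1/\delta+1}$ gives $\mathrm{SRank}(X)\le 1+\delta$.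
   Context: $e_N$ is the $N$-th standard basis row vector of $\mathbb{R}^N$. The causal graph has edges $(j,i)$ for $j\le i$, meaning token $i$ attends to tokens $1,\dots,i$. An equilibrium is a fixed point of the update map. $\|\cdot\|_F$ is the Frobenius norm and $\|\cdot\|_2$ the spectral norm. *)

From mathcomp Require Import all_boot all_order all_algebra.
From mathcomp Require Import boolp classical_sets reals.
Set Implicit Arguments. Unset Strict Implicit. Unset Printing Implicit Defensive.
Import Order.TTheory GRing.Theory Num.Theory.
Local Open Scope ring_scope.

(* All indices are 0-based: paper row/column i corresponds to i-1 here. *)

Section Defs.
Variable R : realType.

Definition row_sqnorm m n (M : 'M[R]_(m, n)) (i : 'I_m) : R :=
  \sum_(j < n) M i j ^+ 2.

Definition frobnorm m n (M : 'M[R]_(m, n)) : R :=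
  Num.sqrt (\sum_(i < m) \sum_(j < n) M i j ^+ 2).

Definition cv_sqnorm n (v : 'cV[R]_n) : R := \sum_(i < n) v i 0 ^+ 2.

Definition specnorm m n (M : 'M[R]_(m, n)) : R :=
  Num.sqrt (sup [set y : R | exists v : 'cV[R]_n,
                   cv_sqnorm v = 1 /\ y = cv_sqnorm (M *m v)]%classic).

Definition srank m n (M : 'M[R]_(m, n)) : R :=
  frobnorm M ^+ 2 / specnorm M ^+ 2.

(* Attention matrix on the causal graph with W_Q = W_K = 0: the softmax
   scores are all equal, so token i attends uniformly to tokens 1..i:
   A_{ij} = 1/i for j <= i (1-based), 0 otherwise. *)
Definition causal_attn N : 'M[R]_N :=
  \matrix_(i < N, j < N) (if (j <= i)%N then (i.+1%:R)^-1 else 0).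

Definition WV N (w : R) : 'M[R]_N :=
  \matrix_(i < N, j < N)
    (if j == i :> nat then 1 else if j == i.+1 :> nat then w else 0).

Definition ln_update N (A Wv X : 'M[R]_N) : 'M[R]_N :=
  let M := A *m X *m Wv in
  \matrix_(i < N, j < N) (M i j / Num.sqrt (row_sqnorm M i)).

Definition is_equilibrium N (A Wv X : 'M[R]_N) : Prop := ln_update A Wv X = X.

Fixpoint xentry (N : nat) (w : R) (s : nat -> R) (k j : nat) : R :=
  match k with
  | 0 => if j == N.-1 then s 0%N else 0
  | k'.+1 => if (j < N.-1)%N then - xentry N w s k' j.+1 / w
             else s k * Num.sqrt (1 - (w ^+ 2)^-1)
  end.

Definition Xmat N (w : R) (s : nat -> R) : 'M[R]_N :=
  \matrix_(i < N, j < N) xentry N w s i j.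

End Defs.

From mathcomp Require Import all_boot all_order all_algebra.
From mathcomp Require Import boolp classical_sets reals.
From mathcomp Require Import fingroup perm ring lra zify.
Set Implicit Arguments. Unset Strict Implicit. Unset Printing Implicit Defensive.
Import Order.TTheory GRing.Theory Num.Theory.
Local Open Scope ring_scope.

(* Each row of X W_V telescopes: row 0 of X W_V is row 0 of X and row k+1 of
   X W_V is X_{k+1,:} - X_{k,:}, so averaging the first i+1 rows of X W_V gives
   X_{i,:} / (i+1); LayerNorm removes the factor, so X is an equilibrium.
   X vanishes above its anti-diagonal, whose entries are nonzero, hence it has
   full rank.  For the stable rank, ||X||_F^2 = N because the rows are unit
   vectors, Cauchy-Schwarz gives ||X||_2^2 <= N, and the last basis vector is
   mapped to the last column of X, of squared norm N - (N-1)/w^2. *)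

Section UnitRows.
Variables (R : realType) (m n : nat) (M : 'M[R]_(m, n)).
Hypothesis unit_rows : forall i, row_sqnorm M i = 1.

Lemma frobnorm_unit_rows : frobnorm M ^+ 2 = m%:R.
Proof.
rewrite /frobnorm sqr_sqrtr; last by do 2 apply: sumr_ge0 => ? _; exact: sqr_ge0.
by rewrite (eq_bigr (fun=> 1)) ?sumr_const ?card_ord // => i _; exact: unit_rows.
Qed.

Lemma sqr_dot_le1 k (a b : 'I_k -> R) :
  \sum_i a i ^+ 2 = 1 -> \sum_i b i ^+ 2 = 1 -> (\sum_i a i * b i) ^+ 2 <= 1.
Proof.
move=> ha hb; set S := \sum_i a i * b i.
have dist_ge0 : 0 <= 2 - 2 * S.
  have -> : 2 - 2 * S = \sum_i (a i - b i) ^+ 2.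
    under eq_bigr do rewrite sqrrB.
    rewrite big_split big_split /= sumrN sumrMnl ha hb /S mulr_natl; ring.
  by apply: sumr_ge0 => i _; exact: sqr_ge0.
have sum_ge0 : 0 <= 2 + 2 * S.
  have -> : 2 + 2 * S = \sum_i (a i + b i) ^+ 2.
    under eq_bigr do rewrite sqrrD.
    rewrite big_split big_split /= sumrMnl ha hb /S mulr_natl; ring.
  by apply: sumr_ge0 => i _; exact: sqr_ge0.
nra.
Qed.

Lemma cv_sqnorm_mulmx_unit_rows v :
  cv_sqnorm v = 1 -> cv_sqnorm (M *m v) <= m%:R.
Proof.
move=> hv; rewrite /cv_sqnorm -[m in m%:R]card_ord -sumr_const.
apply: ler_sum => i _; rewrite mxE; apply: sqr_dot_le1 => //.
exact: unit_rows.
Qed.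

Lemma srank_unit_rows_bounds v : cv_sqnorm v = 1 -> 1 <= cv_sqnorm (M *m v) ->
  1 <= srank M <= m%:R / cv_sqnorm (M *m v).
Proof.
move=> hv hMv1; set L := cv_sqnorm (M *m v).
set S := [set y : R | exists u : 'cV[R]_n,
            cv_sqnorm u = 1 /\ y = cv_sqnorm (M *m u)]%classic.
have S_ub : ubound S m%:R by move=> y [u [hu ->]]; exact: cv_sqnorm_mulmx_unit_rows.
have sup_le : sup S <= m%:R by apply: ge_sup => //; exists L, v.
have le_sup : L <= sup S by apply: ub_le_sup; [exists m%:R | exists v].
have L_gt0 : 0 < L by apply: lt_le_trans hMv1.
have sup_gt0 : 0 < sup S by apply: lt_le_trans le_sup.
have m_gt0 : 0 < m%:R :> R by apply: lt_le_trans sup_le.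
have -> : srank M = m%:R / sup S.
  by rewrite /srank frobnorm_unit_rows /specnorm sqr_sqrtr // ltW.
by rewrite ler_pdivlMr // mul1r sup_le ler_pM2l // lef_pV2.
Qed.

End UnitRows.

Lemma unitmx_antitrig (F : fieldType) n (M : 'M[F]_n.+1) :
  (forall i j : 'I_n.+1, (i + j < n)%N -> M i j = 0) ->
  (forall i : 'I_n.+1, M i (rev_ord i) != 0) -> M \in unitmx.
Proof.
move=> M_upper M_antidiag; rewrite unitmxE unitfE.
pose P : {perm 'I_n.+1} := perm (@rev_ord_inj n.+1).
have : \det (col_perm P M) != 0.
  rewrite det_trig; last first.
    apply/is_trig_mxP => i j ij; rewrite mxE permE /=.
    by apply: M_upper => /=; have := ltn_ord j; lia.
  rewrite prodf_seq_neq0; apply/allP => i _ /=.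
  by rewrite mxE permE M_antidiag.
by rewrite col_permE det_mulmx mulf_eq0 negb_or => /andP[].
Qed.

Section Dynamics.
Variable R : realType.

Lemma cv_sqnorm_delta m (i : 'I_m) : cv_sqnorm (delta_mx i 0 : 'cV[R]_m) = 1.
Proof.
rewrite /cv_sqnorm (bigD1 i) //= big1 => [|k /negbTE ki]; rewrite !mxE ?ki ?eqxx //=.
  by rewrite expr1n addr0.
by rewrite expr0n.
Qed.

Lemma is_equilibrium_row_scaling N (A Wv X : 'M[R]_N) (c : 'I_N -> R) :
  (forall i, 0 < c i) -> (forall i, row_sqnorm X i = 1) ->
  (forall i j, (A *m X *m Wv) i j = c i * X i j) -> is_equilibrium A Wv X.
Proof.
move=> c_gt0 unit_rows AXW; apply/matrixP => i j; rewrite mxE.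
have -> : row_sqnorm (A *m X *m Wv) i = c i ^+ 2.
  rewrite /row_sqnorm; under eq_bigr do rewrite AXW exprMn.
  by rewrite -mulr_sumr -/(row_sqnorm X i) unit_rows mulr1.
rewrite AXW sqrtr_sqr gtr0_norm // mulrAC divff ?mul1r //.
exact: lt0r_neq0.
Qed.

Lemma causal_attn_mulmx N (B : 'M[R]_N) (i j : 'I_N) :
  (causal_attn R N *m B) i j = (i.+1%:R)^-1 * \sum_(k < N | (k <= i)%N) B k j.
Proof.
rewrite mxE mulr_sumr [RHS]big_mkcond; apply: eq_bigr => k _; rewrite mxE.
by case: ifP; rewrite ?mul0r ?mulr0.
Qed.

Lemma mulmx_WV N (w : R) (F : nat -> nat -> R) (k j : 'I_N) :
  ((\matrix_(i < N, l < N) F i l) *m WV N w) k j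
  = F k j + (if (0 < j)%N then w * F k j.-1 else 0).
Proof.
rewrite mxE (bigD1 j) //= !mxE eqxx mulr1; congr (_ + _).
under eq_bigr => l lj do rewrite !mxE val_eqE eq_sym (negbTE lj).
case: (posnP j) => [j0 | j_gt0].
  by rewrite big1 // => l _; rewrite j0 mulr0.
have jm1 : (j.-1 < N)%N by have := ltn_ord j; lia.
rewrite (bigD1 (Ordinal jm1)) /=; last by rewrite -val_eqE /=; lia.
rewrite prednK // eqxx mulrC big1 ?addr0 // => l /andP[_ lj1].
rewrite ifN ?mulr0 //; apply: contra lj1 => /eqP jl.
by rewrite -val_eqE /= jl.
Qed.

End Dynamics.

Section Construction.
Variables (R : realType) (n : nat) (w : R) (s : nat -> R).
Hypothesis w_gt1 : 1 < w.
Hypothesis s_sign : forall k, (k < n.+1)%N -> s k = 1 \/ s k = -1.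
Local Notation x := (xentry n.+1 w s).
Local Notation X := (Xmat n.+1 w s).

Let w_neq0 : w != 0. Proof. by apply: lt0r_neq0; apply: lt_trans w_gt1. Qed.

Lemma xentry_eq0 k j : (j + k < n)%N -> x k j = 0.
Proof.
elim: k j => [|k IH] j /= jk; first by rewrite ifN //; apply/eqP; lia.
by rewrite ifT ?IH ?oppr0 ?mul0r //; lia.
Qed.

Lemma xentry_antidiag_neq0 k : (k <= n)%N -> x k (n - k) != 0.
Proof.
elim: k => [_ | k IH kn] /=.
  by rewrite subn0 eqxx; case: (@s_sign 0%N (ltn0Sn n)) => ->; rewrite ?oppr_eq0 oner_eq0.
rewrite ifT; last by lia.
have -> : (n - k.+1).+1 = (n - k)%N by lia.
by rewrite mulNr oppr_eq0 mulf_neq0 ?invr_eq0 ?IH //; lia.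
Qed.

Lemma sqr_sign k : (k < n.+1)%N -> s k ^+ 2 = 1.
Proof. by case/s_sign => ->; rewrite ?sqrrN expr1n. Qed.

Lemma sqr_sqrt_1_sub_invw2 : Num.sqrt (1 - (w ^+ 2)^-1) ^+ 2 = 1 - (w ^+ 2)^-1.
Proof.
have w2_ge1 : 1 <= w ^+ 2 := exprn_ege1 2 (ltW w_gt1).
by rewrite sqr_sqrtr // subr_ge0 invf_le1 // (lt_le_trans ltr01).
Qed.

Lemma row_sqnorm_xentry k : (k < n.+1)%N -> \sum_(j < n.+1) x k j ^+ 2 = 1.
Proof.
elim: k => [_ | k IH kn].
  rewrite big_ord_recr /= eqxx sqr_sign // big1 ?add0r // => j _.
  by rewrite ifN ?expr0n //; apply/eqP => jn; have := ltn_ord j; lia.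
have IH' := IH (ltnW kn).
rewrite big_ord_recl xentry_eq0 /= ?expr0n ?add0r in IH'; last by lia.
rewrite big_ord_recr /= ltnn.
under eq_bigr => j _ do rewrite /= ltn_ord exprMn sqrrN exprVn.
rewrite -mulr_suml IH' exprMn sqr_sign // sqr_sqrt_1_sub_invw2; field.
exact: w_neq0.
Qed.

Lemma row_sqnorm_Xmat i : row_sqnorm X i = 1.
Proof.
by rewrite /row_sqnorm; under eq_bigr do rewrite mxE; exact: row_sqnorm_xentry.
Qed.

Lemma Xmat_WV_telescope (i j : 'I_n.+1) :
  \sum_(k < n.+1 | (k <= i)%N) (X *m WV n.+1 w) k j = X i j.
Proof.
under eq_bigr do rewrite mulmx_WV.
set G := fun k => x k j + (if (0 < j)%N then w * x k j.-1 else 0).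
have G0 : G 0%N = x 0%N j.
  rewrite /G; case: (posnP j) => [_ | j_gt0]; first by rewrite addr0.
  by rewrite [x 0%N j.-1]/= ifN ?mulr0 ?addr0 //; apply/eqP; have := ltn_ord j; lia.
have GS k : (k < n)%N -> G k.+1 = x k.+1 j - x k j.
  move=> kn; rewrite /G; case: (posnP j) => [j0 | j_gt0].
    by rewrite j0 (@xentry_eq0 k 0) ?subr0 ?addr0 //; lia.
  rewrite [x k.+1 j.-1]/= ifT; last by have := ltn_ord j; lia.
  by rewrite prednK // mulrCA divff ?mulr1.
rewrite -(big_ord_widen n.+1 G (ltn_ord i)) big_ord_recl G0 mxE.
have -> : \sum_(k < i) G (lift ord0 k) = x i j - x 0%N j.
  rewrite -(telescope_sumr (fun k => x k j) (leq0n i)) big_mkord; apply: eq_bigr => k _.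
  by apply: (GS k); have := ltn_ord k; have := ltn_ord i; lia.
by rewrite addrC subrK.
Qed.

Lemma causal_Xmat_WV (i j : 'I_n.+1) :
  (causal_attn R n.+1 *m X *m WV n.+1 w) i j = (i.+1%:R)^-1 * X i j.
Proof. by rewrite -mulmxA causal_attn_mulmx Xmat_WV_telescope. Qed.

Lemma Xmat_equilibrium : is_equilibrium (causal_attn R n.+1) (WV n.+1 w) X.
Proof.
apply: (is_equilibrium_row_scaling (c := fun i : 'I_n.+1 => (i.+1%:R)^-1)).
- by move=> i; rewrite invr_gt0 ltr0Sn.
- exact: row_sqnorm_Xmat.
- exact: causal_Xmat_WV.
Qed.

Lemma Xmat_unit : X \in unitmx.
Proof.
apply: unitmx_antitrig => [i j ij | i]; rewrite mxE.
  by apply: xentry_eq0; rewrite addnC.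
have -> : (rev_ord i : nat) = (n - i)%N by rewrite /= subSS.
by apply: xentry_antidiag_neq0; have := ltn_ord i; lia.
Qed.

Lemma Xmat_last_column :
  cv_sqnorm (X *m delta_mx ord_max 0) = n.+1%:R - n%:R / w ^+ 2.
Proof.
rewrite -colE /cv_sqnorm big_ord_recl !mxE /= eqxx sqr_sign //.
under eq_bigr => i _ do
  rewrite !mxE /= ltnn exprMn sqr_sqrt_1_sub_invw2 (sqr_sign (ltn_ord (lift ord0 i))) mul1r.
by rewrite sumr_const card_ord -mulr_natr -natr1; ring.
Qed.

End Construction.

Lemma stable_rank_bound_le1D (R : realFieldType) n (w d : R) :
  0 < d -> d^-1 + 1 <= w ^+ 2 ->
  n.+1%:R / (n.+1%:R - n%:R / w ^+ 2) <= 1 + d.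
Proof.
move=> d_gt0 w2_ge; set u := (w ^+ 2)^-1.
have w2_gt0 : 0 < w ^+ 2 by apply: lt_le_trans w2_ge; rewrite ltr_pwDr ?invr_ge0 ?ltW.
have u_ge0 : 0 <= u by rewrite invr_ge0 ltW.
have d_w2 : 1 + d <= d * w ^+ 2.
  have := ler_wpM2l (ltW d_gt0) w2_ge.
  by rewrite mulrDr mulfV ?lt0r_neq0 // mulr1.
have u_le : (1 + d) * u <= d.
  have := ler_wpM2r u_ge0 d_w2.
  by rewrite -mulrA mulfV ?lt0r_neq0 // mulr1.
have n_ge0 : 0 <= n%:R :> R by [].
have L_gt0 : 0 < n.+1%:R - n%:R * u by rewrite -natr1; nra.
rewrite ler_pdivrMr // -natr1; nra.
Qed.

Theorem mainTheorem14 (R : realType) (N : nat) (w : R) (s : nat -> R) :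
  (2 <= N)%N -> 1 < w ->
  (forall k, (k < N)%N -> s k = 1 \/ s k = -1) ->
  let X := Xmat N w s in
  [/\ is_equilibrium (causal_attn R N) (WV N w) X,
      (forall i : 'I_N, row_sqnorm X i = 1),
      \rank X = N,
      1 <= srank X /\ srank X <= N%:R / (N%:R - (N.-1)%:R / w ^+ 2)
    & forall delta : R, 0 < delta -> Num.sqrt (delta^-1 + 1) <= w ->
        srank X <= 1 + delta].
Proof.
case: N => [|n] // _ w_gt1 s_sign X; rewrite /=.
have unit_rows := row_sqnorm_Xmat w_gt1 s_sign.
have w2_ge1 : 1 <= w ^+ 2 := exprn_ege1 2 (ltW w_gt1).
have last_col_ge1 : 1 <= cv_sqnorm (X *m delta_mx ord_max 0).
  rewrite Xmat_last_column // -natr1 addrAC lerDr subr_ge0.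
  by rewrite ler_pdivrMr ?ler_peMr ?(lt_le_trans ltr01).
have /andP[srank_ge1 srank_le] :=
  srank_unit_rows_bounds unit_rows (cv_sqnorm_delta R ord_max) last_col_ge1.
rewrite Xmat_last_column // in srank_le.
split => //; first exact: Xmat_equilibrium.
  exact/mxrank_unit/Xmat_unit.
move=> d d_gt0 sqrt_le_w; apply: le_trans srank_le (stable_rank_bound_le1D _ d_gt0 _).
have w_ge0 : 0 <= w := ltW (lt_trans ltr01 w_gt1).
by rewrite -(@ler_sqrt _ _ (w ^+ 2) (sqr_ge0 w)) sqrtr_sqr ger0_norm.
Qed.
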